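(* Let $\nu>0$, $d\ge1$ an integer and $m\ge1$ an integer. Then \[ I(d,\nu,m):=\sum_{n>m}\ \sum_{q\in\mathbb{Z}^{d-1}}\left(n^2+|q|^2\right)^{-\nu-d/2}\;\le\;\frac{\beta(d,\nu)}{m^{2\nu}}, \] where the sum over $n$ runs over integers $n>m$ and $\beta$ is defined by $\beta(1,\nu)=\frac{1}{2\nu}$ and $\beta(d,\nu)=\left(4+\frac{2}{2\nu+d-1}\right)\beta(d-1,\nu)$ for $d>1$. In particular, for any $\nu\ge 1/2$, $\beta(d,\nu)\le \frac{5^{d-1}}{2\nu}$ for all $d=1,2,\dots$.
   Context: $|q|$ denotes the Euclidean norm of $q\in\mathbb{Z}^{d-1}$; when $d=1$ the inner sum over $\mathbb{Z}^{0}$ consists of the single term $q=0$ (so $I(1,\nu,m)=\sum_{n>m}n^{-2\nu-1}$). *)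

From HB Require Import structures.
From mathcomp Require Import all_boot all_order all_algebra.
From mathcomp Require Import all_classical all_reals all_analysis.
Set Implicit Arguments. Unset Strict Implicit. Unset Printing Implicit Defensive.
Import Order.TTheory GRing.Theory Num.Theory.
Local Open Scope ring_scope.

(* betaS nu k = beta(k+1, nu):  beta(1,nu) = 1/(2 nu),
   beta(d,nu) = (4 + 2/(2 nu + d - 1)) beta(d-1,nu) for d > 1. *)
Fixpoint betaS {R : realType} (nu : R) (k : nat) : R :=
  match k with
  | 0 => 1 / (2 * nu)
  | k'.+1 => (4 + 2 / (2 * nu + k'.+1%:R)) * betaS nu k'
  end.

Definition beta {R : realType} (d : nat) (nu : R) : R := betaS nu d.-1.

Definition sqnorm {R : realType} (k : nat) (q : 'rV[int]_k) : R :=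
  \sum_(i < k) ((q ord0 i)%:~R) ^+ 2.

Definition Iterm {R : realType} (d : nat) (nu : R) (p : nat * 'rV[int]_(d.-1)) : R :=
  ((p.1)%:R ^+ 2 + sqnorm p.2) `^ (- nu - d%:R / 2).

Definition Isum {R : realType} (d : nat) (nu : R) (m : nat) : \bar R :=
  esum [set p : nat * 'rV[int]_(d.-1) | (m < p.1)%N] (fun p => (@Iterm R d nu p)%:E).

From HB Require Import structures.
From mathcomp Require Import all_boot all_order all_algebra.
From mathcomp Require Import all_classical all_reals all_analysis.
From mathcomp Require Import ring lra.
Import Order.TTheory GRing.Theory Num.Theory.
Set Implicit Arguments. Unset Strict Implicit. Unset Printing Implicit Defensive.
Local Open Scope classical_set_scope.
Local Open Scope ring_scope.

(* Bound the partial sums over boxes {m < n <= N} x [-N, N]^(d-1) by induction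
   on d.  Summing out one coordinate j of q costs a factor 4 + 2/a, where
   a = 2 nu + d - 1: for A >= 1, sum_j (A + j^2)^(-(a+1)/2) <= (4 + 2/a) A^(-a/2),
   because the terms with j > 0 are dominated by the decrements of a potential
   that is affine up to sqrt A and equal to x^(-a)/a beyond it.  The
   one-dimensional base case sum_(n > m) n^(-2 nu - 1) <= m^(-2 nu)/(2 nu)
   telescopes by convexity of t^(-2 nu).  Every finite part of the index set
   lies in such a box, so the bound passes to the unordered sum.  For nu >= 1/2
   each factor 4 + 2/(2 nu + d - 1) is at most 5. *)

Section power_bounds.
Variable R : realType.
Implicit Types a p r x y : R.

Lemma powR_subr1 x p : 0 < x -> x `^ (p - 1) = x `^ p / x.
Proof.
move=> x0; rewrite powRB ?(gt_eqF x0) ?implybT //.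
by rewrite powRr1 // ltW.
Qed.

Lemma powR_sqrN x a : 0 <= x -> (x ^+ 2) `^ (- ((a + 1) / 2)) = x `^ (- a - 1).
Proof.
by move=> x0; rewrite -powR_mulrn // -powRrM; congr (_ `^ _); field.
Qed.

Lemma ler_powRN p x y : 0 <= p -> 0 < x -> x <= y -> y `^ (- p) <= x `^ (- p).
Proof.
move=> p0 x0 xy; have y0 := lt_le_trans x0 xy.
rewrite !powRN lef_pV2 ?posrE ?powR_gt0 //.
by apply: ge0_ler_powR; rewrite // nnegrE ltW.
Qed.

Lemma powRN_tangent a x y : 0 < a -> 0 < y -> y <= x ->
  a * (x - y) * x `^ (- a - 1) <= y `^ (- a) - x `^ (- a).
Proof.
move=> a0 y0 yx; have x0 := lt_le_trans y0 yx.
have ln_ratio : 1 - y / x <= ln x - ln y.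
  have := @le_ln1Dx R (y / x - 1); rewrite subrKC ln_div ?posrE //.
  by have := divr_gt0 y0 x0; lra.
have -> : y `^ (- a) = x `^ (- a) * expR (a * (ln x - ln y)).
  by rewrite /powR !gt_eqF // -expRD; congr expR; ring.
have exp_ge := expR_ge1Dx (a * (ln x - ln y)).
have xa0 := powR_gt0 (- a) x0.
rewrite powR_subr1 //.
have -> : a * (x - y) * (x `^ (- a) / x) = x `^ (- a) * (a * (1 - y / x)).
  by field; rewrite gt_eqF.
have : a * (1 - y / x) <= a * (ln x - ln y) by rewrite ler_wpM2l // ltW.
nra.
Qed.

Lemma ler_sum_telescope (u G : nat -> R) (m N : nat) :
  (forall k, (m <= k)%N -> u k <= G k - G k.+1) -> (forall k, 0 <= G k) ->
  \sum_(m <= k < N) u k <= G m.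
Proof.
move=> uG G0; have [mN|Nm] := leqP m N; last by rewrite big_geq ?G0 // ltnW.
apply: (@le_trans _ _ (\sum_(m <= k < N) (G k - G k.+1))).
  by rewrite big_nat [leRHS]big_nat ler_sum // => k /andP[/uG].
rewrite (telescope_sumr_eq (fun k => - G k) _ mN) => [|k _].
  by have := G0 N; lra.
by rewrite opprK addrC.
Qed.

Lemma sum_powRN_tail a (m N : nat) : 0 < a -> (0 < m)%N ->
  \sum_(m <= n < N) n.+1%:R `^ (- a - 1) <= m%:R `^ (- a) / a.
Proof.
move=> a0 m0; apply: (ler_sum_telescope (G := fun n : nat => n%:R `^ (- a) / a)).
  2: by move=> n; rewrite divr_ge0 ?powR_ge0 ?ltW.
move=> n mn.
rewrite -mulrBl ler_pdivlMr // mulrC.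
have := @powRN_tangent a n.+1%:R n%:R a0; rewrite -natrB // subSnn mulr1.
by apply; rewrite ?ltr0n ?ler_nat //; apply: leq_trans mn.
Qed.

(* The integral of min (r^(-a-1), t^(-a-1)) over t in [x, +oo), an upper
   bound for the integral of (r^2 + t^2)^(-(a+1)/2) over the same range. *)
Definition line_potential a r x : R :=
  if x <= r then r `^ (- a) / a + (r - x) * r `^ (- a - 1) else x `^ (- a) / a.

Section line_potential.
Variables a r : R.
Hypotheses (a_gt0 : 0 < a) (r_gt0 : 0 < r).
Local Notation G := (line_potential a r).
Local Notation f x := ((r ^+ 2 + x ^+ 2) `^ (- ((a + 1) / 2))).

Lemma line_potential_ge0 x : 0 <= G x.
Proof.
rewrite /line_potential; case: ifP => [xr|_]; last by rewrite divr_ge0 ?powR_ge0 ?ltW.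
by rewrite addr_ge0 ?divr_ge0 ?mulr_ge0 ?powR_ge0 ?subr_ge0 // ltW.
Qed.

Lemma line_potential_tail x : r <= x -> G x = x `^ (- a) / a.
Proof.
move=> rx; rewrite /line_potential; case: ifP => // xr.
have -> : x = r by apply/eqP; rewrite eq_le xr rx.
by rewrite subrr mul0r addr0.
Qed.

Lemma line_potential_step x y : 0 <= y -> y <= x -> (x - y) * f x <= G y - G x.
Proof.
move=> y0 yx; have x0 := le_trans y0 yx.
have hp : 0 <= (a + 1) / 2 by rewrite divr_ge0 // addr_ge0 // ltW.
have f_le_r z : 0 <= z -> f z <= r `^ (- a - 1).
  move=> z0; rewrite -(powR_sqrN a (ltW r_gt0)).
  by rewrite ler_powRN ?exprn_gt0 ?lerDl ?sqr_ge0.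
have line u v : u <= v -> v <= r -> G u - G v = (v - u) * r `^ (- a - 1).
  by move=> uv vr; rewrite /line_potential vr (le_trans uv vr); ring.
have tail u v : r <= u -> u <= v -> (v - u) * f v <= G u - G v.
  move=> ru uv; have u0 := lt_le_trans r_gt0 ru; have v0 := le_trans (ltW u0) uv.
  rewrite !line_potential_tail ?(le_trans ru uv) // -mulrBl ler_pdivlMr // mulrC mulrA.
  apply: le_trans (powRN_tangent a_gt0 u0 uv).
  rewrite ler_wpM2l ?mulr_ge0 ?subr_ge0 ?(ltW a_gt0) //.
  rewrite -(powR_sqrN a v0) ler_powRN ?exprn_gt0 ?lerDr ?sqr_ge0 //.
  exact: lt_le_trans u0 uv.
have [xr|rx] := leP x r; first by rewrite line // ler_wpM2l ?subr_ge0 ?f_le_r.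
have [ry|yr] := leP r y; first exact: tail.
have -> : G y - G x = (G y - G r) + (G r - G x) by ring.
have -> : (x - y) * f x = (r - y) * f x + (x - r) * f x by ring.
apply: lerD; last exact: tail (lexx r) (ltW rx).
by rewrite line ?(ltW yr) // ler_wpM2l ?subr_ge0 ?f_le_r ?(ltW yr).
Qed.

Lemma sum_line_half_le (N : nat) :
  \sum_(0 <= k < N) f k.+1%:R <= r `^ (- a) / a + r `^ (- a).
Proof.
have -> : r `^ (- a) / a + r `^ (- a) = G 0%:R.
  rewrite /line_potential ltW // subr0 powR_subr1 //.
  by rewrite mulrCA mulfV ?gt_eqF // mulr1.
apply: (ler_sum_telescope (G := fun k : nat => G k%:R)) => [k _|k].
  have := @line_potential_step k.+1%:R k%:R (ler0n _ _).
  by rewrite ler_nat leqnSn -natrB // subSnn mul1r; apply.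
exact: line_potential_ge0.
Qed.

End line_potential.

End power_bounds.

Definition zrange (N : nat) : seq int :=
  0 :: [seq k.+1%:Z | k <- index_iota 0 N] ++ [seq - k.+1%:Z | k <- index_iota 0 N].

Lemma mem_zrange (N : nat) (j : int) : (`|j| <= N)%N -> j \in zrange N.
Proof.
case: j => [[|n]|n] jN; rewrite inE ?eqxx // mem_cat; apply/orP; right; apply/orP.
  by left; apply/mapP; exists n; rewrite ?mem_index_iota.
by right; apply/mapP; exists n; rewrite ?mem_index_iota // NegzE.
Qed.

Definition row_cons {k : nat} (j : int) (q : 'rV[int]_k) : 'rV[int]_k.+1 :=
  \row_i (if unlift ord0 i is Some i' then q ord0 i' else j).

Definition row_behead {k : nat} (q : 'rV[int]_k.+1) : 'rV[int]_k :=
  \row_i q ord0 (lift ord0 i).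

Lemma row_cons_behead (k : nat) (q : 'rV[int]_k.+1) :
  row_cons (q ord0 ord0) (row_behead q) = q.
Proof. by apply/rowP => i; rewrite !mxE; case: unliftP => [i' ->|->] //; rewrite mxE. Qed.

Fixpoint zbox (N k : nat) : seq 'rV[int]_k :=
  if k is k'.+1 then [seq row_cons j q | q <- zbox N k', j <- zrange N] else [:: 0].

Lemma mem_zbox (N k : nat) (q : 'rV[int]_k) :
  (forall i, `|q ord0 i| <= N)%N -> q \in zbox N k.
Proof.
elim: k q => [|k IH] q qN; first by rewrite inE (thinmx0 q).
rewrite -[q]row_cons_behead; apply: allpairs_f; last exact: mem_zrange.
by apply: IH => i; rewrite mxE.
Qed.

Section lattice_sums.
Variable R : realType.

Lemma sqnorm_row_cons (k : nat) (j : int) (q : 'rV[int]_k) :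
  sqnorm (row_cons j q) = j%:~R ^+ 2 + sqnorm q :> R.
Proof.
rewrite /sqnorm big_ord_recl !mxE unlift_none; congr (_ + _).
by apply: eq_bigr => i _; rewrite mxE liftK.
Qed.

Lemma sqnorm_ge0 (k : nat) (q : 'rV[int]_k) : 0 <= sqnorm q :> R.
Proof. by apply: sumr_ge0 => i _; apply: sqr_ge0. Qed.

Lemma sum_zboxS (g : R -> R) (N k : nat) :
  \sum_(q <- zbox N k.+1) g (sqnorm q) =
  \sum_(q <- zbox N k) \sum_(j <- zrange N) g (j%:~R ^+ 2 + sqnorm q).
Proof.
rewrite big_allpairs_dep; apply: eq_bigr => q _.
by apply: eq_bigr => j _; rewrite sqnorm_row_cons.
Qed.

Lemma sum_zrange_le (a r : R) (N : nat) : 0 < a -> 1 <= r ->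
  \sum_(j <- zrange N) (r ^+ 2 + j%:~R ^+ 2) `^ (- ((a + 1) / 2))
    <= (4 + 2 / a) * r `^ (- a).
Proof.
move=> a0 r1; have r0 : 0 < r by lra.
rewrite big_cons big_cat !big_map /= expr0n addr0 (powR_sqrN a (ltW r0)).
under eq_bigr do rewrite -pmulrn.
under [X in _ + (_ + X)]eq_bigr do rewrite mulrNz sqrrN -pmulrn.
have half := sum_line_half_le a0 r0 N.
have center : r `^ (- a - 1) <= r `^ (- a).
  by rewrite powR_subr1 // ler_pdivrMr // ler_peMr ?powR_ge0.
have ra0 := powR_ge0 r (- a).
have -> : (4 + 2 / a) * r `^ (- a) =
    2 * (r `^ (- a) / a + r `^ (- a)) + 2 * r `^ (- a).
  by field; rewrite gt_eqF.
lra.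
Qed.

Lemma sum_zrange_shift_le (a A : R) (N : nat) : 0 < a -> 1 <= A ->
  \sum_(j <- zrange N) (A + j%:~R ^+ 2) `^ (- ((a + 1) / 2))
    <= (4 + 2 / a) * A `^ (- (a / 2)).
Proof.
move=> a0 A1; have A0 : 0 <= A by lra.
have sqrtA1 : 1 <= Num.sqrt A by rewrite -sqrtr1 ler_sqrt //; lra.
have := sum_zrange_le N a0 sqrtA1; rewrite sqr_sqrtr //.
by rewrite -powR12_sqrt // -powRrM; congr (_ <= _ * (_ `^ _)); field.
Qed.

Lemma sum_Iterm_zbox_le (nu : R) (m N k : nat) : 0 < nu -> (0 < m)%N ->
  \sum_(m.+1 <= n < N.+1) \sum_(q <- zbox N k) @Iterm R k.+1 nu (n, q)
    <= betaS nu k / m%:R `^ (2 * nu).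
Proof.
move=> nu0 m0; elim: k => [|k IH].
  rewrite /= big_add1 /=.
  under eq_bigr do rewrite big_seq1 /Iterm /sqnorm big_ord0 addr0.
  have -> : - nu - 1%:R / 2 = - ((2 * nu + 1) / 2) by field.
  under eq_bigr do rewrite powR_sqrN //.
  have -> : 1 / (2 * nu) / m%:R `^ (2 * nu) = m%:R `^ (- (2 * nu)) / (2 * nu).
    by rewrite powRN; field; rewrite ?gt_eqF ?powR_gt0 ?ltr0n //; lra.
  by apply: sum_powRN_tail; rewrite // mulr_gt0.
set a := 2 * nu + k.+1%:R.
have a0 : 0 < a by rewrite /a addr_gt0 ?mulr_gt0.
have -> : betaS nu k.+1 / m%:R `^ (2 * nu) =
    (4 + 2 / a) * (betaS nu k / m%:R `^ (2 * nu)).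
  by rewrite /= mulrA.
apply: le_trans (ler_wpM2l _ IH); last by rewrite addr_ge0 ?divr_ge0 ?ltW.
rewrite mulr_sumr big_nat [leRHS]big_nat; apply: ler_sum => n /andP[mn _].
rewrite /Iterm /= mulr_sumr.
rewrite (sum_zboxS (fun s => (n%:R ^+ 2 + s) `^ (- nu - k.+2%:R / 2))).
apply: ler_sum => q _.
have A1 : 1 <= n%:R ^+ 2 + sqnorm q :> R.
  have n1 : 1 <= n%:R ^+ 2 :> R.
    by rewrite -natrX ler1n expn_gt0 (leq_ltn_trans (leq0n m) mn).
  by have := sqnorm_ge0 q; lra.
have -> : - nu - k.+2%:R / 2 = - ((a + 1) / 2) by rewrite /a (mulrSr _ k.+1); field.
have -> : - nu - k.+1%:R / 2 = - (a / 2) by rewrite /a; field.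
under eq_bigr do rewrite addrCA addrC.
exact: sum_zrange_shift_le.
Qed.

End lattice_sums.

Lemma betaS_ge0 (R : realType) (nu : R) (k : nat) : 0 < nu -> 0 <= betaS nu k.
Proof.
move=> nu0; elim: k => [|k IH] /=; first by rewrite divr_ge0 // mulr_ge0 // ltW.
by rewrite mulr_ge0 // addr_ge0 // divr_ge0 // addr_ge0 // mulr_ge0 // ltW.
Qed.

Lemma betaS_le (R : realType) (nu : R) (k : nat) : 1 / 2 <= nu ->
  betaS nu k <= 5 ^+ k / (2 * nu).
Proof.
move=> nu_ge; have nu0 : 0 < nu by lra.
elim: k => [|k IH] /=; first by rewrite expr0.
have k1 : 1 <= k.+1%:R :> R by rewrite ler1n.
have a2 : 2 <= 2 * nu + k.+1%:R by lra.
rewrite exprS -mulrA ler_pM ?betaS_ge0 // ?addr_ge0 ?divr_ge0 //; try lra.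
suff : 2 / (2 * nu + k.+1%:R) <= 1 by lra.
by rewrite ler_pdivrMr ?mul1r //; lra.
Qed.

Lemma ler_sum_uniq_subset (R : numDomainType) (T : eqType) (s1 s2 : seq T)
    (f : T -> R) :
  (forall x, 0 <= f x) -> uniq s1 -> {subset s1 <= s2} ->
  \sum_(x <- s1) f x <= \sum_(x <- s2) f x.
Proof.
move=> f0 s1_uniq s12.
have sum_undup_le (s : seq T) : \sum_(x <- undup s) f x <= \sum_(x <- s) f x.
  elim: s => //= x s IH; case: ifP => _; rewrite !big_cons ?lerD2l //.
  by rewrite -[leLHS]add0r lerD.
apply: le_trans (sum_undup_le s2); rewrite [leRHS](bigID (mem s1)) /=.
have -> : \sum_(x <- undup s2 | x \in s1) f x = \sum_(x <- s1) f x.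
  rewrite -big_filter; apply/perm_big/uniq_perm; rewrite ?filter_uniq ?undup_uniq // => x.
  by rewrite mem_filter mem_undup; apply/andP/idP => [[]//|xs1]; split=> //; apply: s12.
by rewrite lerDl sumr_ge0.
Qed.

Lemma finite_set_bounded (T : eqType) (F : set T) (g : T -> nat) :
  finite_set F -> exists N, forall x, F x -> (g x <= N)%N.
Proof.
by case/finite_seqP => s ->; exists (\max_(x <- s) g x) => x xs; apply: leq_bigmax_seq.
Qed.

Lemma esum_le_cover (R : realType) (T : choiceType) (A : set T) (f : T -> R) (M : R) :
  (forall x, 0 <= f x) ->
  (forall F, finite_set F -> F `<=` A ->
     exists2 s : seq T, F `<=` [set` s] & \sum_(x <- s) f x <= M) ->
  (esum A (fun x => (f x)%:E) <= M%:E)%E.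
Proof.
move=> f0 cover; apply: ge_ereal_sup => _ [F [finF FA] <-].
have [s Fs sM] := cover F finF FA.
rewrite fsumEFin // lee_fin fsbig_finite //; apply: le_trans sM.
by apply: ler_sum_uniq_subset => // x; rewrite in_fset_set // inE => /Fs.
Qed.

Lemma finite_set_sub_zbox (k m : nat) (F : set (nat * 'rV[int]_k)) :
  finite_set F -> F `<=` [set p | (m < p.1)%N] ->
  exists N, F `<=` [set` [seq (n, q) | n <- index_iota m.+1 N.+1, q <- zbox N k]].
Proof.
move=> finF Fm.
pose size_bound (p : nat * 'rV[int]_k) := (p.1 + \max_(i < k) `|p.2 ord0 i|)%N.
have [N FN] := finite_set_bounded size_bound finF.
exists N => -[n q] Fnq; have nqN := FN _ Fnq.
apply: allpairs_f.
  by rewrite mem_index_iota (Fm _ Fnq) //= ltnS (leq_trans (leq_addr _ _) nqN).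
apply: mem_zbox => i; apply: leq_trans nqN; apply: leq_trans (leq_addl _ _).
exact: leq_bigmax (fun i => `|q ord0 i|%N) i.
Qed.

Theorem lemma3p4 (R : realType) :
  (forall (nu : R) (d m : nat), 0 < nu -> (1 <= d)%N -> (1 <= m)%N ->
     (Isum d nu m <= (beta d nu / (m%:R `^ (2 * nu)))%:E)%E) /\
  (forall (nu : R) (d : nat), 1 / 2 <= nu -> (1 <= d)%N ->
     beta d nu <= 5 ^+ d.-1 / (2 * nu)).
Proof.
split=> [nu [//|k] m nu0 _ m0 | nu [//|k] nu_ge _]; last exact: betaS_le.
apply: esum_le_cover => [p|F finF Fm]; first exact: powR_ge0.
have [N FN] := finite_set_sub_zbox finF Fm.
exists [seq (n, q) | n <- index_iota m.+1 N.+1, q <- zbox N k] => //.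
by rewrite big_allpairs; apply: sum_Iterm_zbox_le.
Qed.
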